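(* For every $n\ge1$ there is an injective map from $\bar{Q}_1(0,n)$ to $\bar{P}_1(0,n)$.
   Context: Partitions: $\lambda_1\ge\cdots\ge\lambda_\ell>0$, $\ell(\lambda)=\ell$, $\lambda_i=0$ for $i>\ell$, $s(\lambda)$ the smallest part with $s(\emptyset)=+\infty$. Rank $=\lambda_1-\ell$. Durfee symbol $(\alpha,\beta)_j$ of $\lambda$: $j$ is the largest integer with $\lambda_j\ge j$ (side of the Durfee square), $\alpha$ is the conjugate of $(\lambda_1-j,\dots,\lambda_j-j)$ (columns right of the square), $\beta=(\lambda_{j+1},\lambda_{j+2},\dots)$ (rows below); $|\lambda|=|\alpha|+|\beta|+j^2$. $\bar{Q}_1(0,n)$ is the set of partitions of $n$ whose Durfee symbol $(\alpha,\beta)_j$ satisfies $j\ge1$, $\beta_1=j$, $\ell(\beta)-\ell(\alpha)\ge1$, $\alpha_1=\alpha_2=j>\alpha_3$ and $s(\beta)\ge3$. $\bar{P}_1(0,n)$ is the set of partitions of $n$ with rank $\ge0$ whose Durfee symbol $(\gamma,\delta)_{j'}$ satisfies $j'\ge1$, $\ell(\gamma)=\ell(\delta)$, $\gamma_1\le j'-3$, $\delta_1=j'$ and $s(\delta)\ge2$. *)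

(* Partitions are represented as seq nat listing the
   parts in nonincreasing order; parts are 1-indexed in the paper, so
   lambda_i = nth 0 l i.-1 (and lambda_i = 0 for i > size l). *)
From mathcomp Require Import all_boot.
Set Implicit Arguments. Unset Strict Implicit. Unset Printing Implicit Defensive.

Definition is_partition (n : nat) (l : seq nat) : bool :=
  [&& sorted geq l, all (fun x => 0 < x) l & sumn l == n].

Definition part (l : seq nat) (i : nat) : nat := nth 0 l i.-1.

Definition durfee (l : seq nat) : nat :=
  foldr maxn 0 [seq j <- iota 0 (size l).+1 | j <= part l j].

(* conjugate of a (weakly decreasing) sequence: k-th part (1-indexed) is
   the number of entries >= k *)
Definition conj_part (s : seq nat) : seq nat :=
  mkseq (fun k => count (fun x => k < x) s) (foldr maxn 0 s).

Definition dalpha (l : seq nat) : seq nat :=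
  conj_part [seq part l i - durfee l | i <- iota 1 (durfee l)].
Definition dbeta (l : seq nat) : seq nat := drop (durfee l) l.

(* s(mu) >= k, with the convention s(emptyset) = +infinity *)
Definition smallest_ge (mu : seq nat) (k : nat) : bool := all (fun x => k <= x) mu.

(* rank >= 0, i.e. lambda_1 - ell >= 0 *)
Definition rank_nonneg (l : seq nat) : bool := size l <= part l 1.

Definition Qbar1 (n : nat) : pred (seq nat) := fun l =>
  let j := durfee l in let a := dalpha l in let b := dbeta l in
  [&& is_partition n l, 1 <= j, part b 1 == j,
      size a + 1 <= size b,
      part a 1 == j, part a 2 == j, part a 3 < j
    & smallest_ge b 3].

Definition Pbar1 (n : nat) : pred (seq nat) := fun l =>
  let j := durfee l in let g := dalpha l in let d := dbeta l in
  [&& is_partition n l, rank_nonneg l, 1 <= j,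
      size g == size d,
      (part g 1 + 3 <= j)%N (* gamma_1 <= j' - 3 over the integers *),
      part d 1 == j
    & smallest_ge d 2].

From mathcomp Require Import all_boot zify.
Set Implicit Arguments. Unset Strict Implicit. Unset Printing Implicit Defensive.

(* A partition l of Qbar1 with Durfee side j and j + m parts is rigid: its
   j-th row is j + 2, its (j+1)-th row is j, and j, m >= 3.  Hence it is
   glue j g B = (j + 2 + g) ++ [:: j + 2; j] ++ B, where g (j - 1 entries in
   [0, m - 3]) lists the excesses of the first j - 1 rows over j + 2 and B
   (m - 1 entries in [3, j]) lists the rows below row j + 1 (Qbar1_shape).
   This shape is sent to qimage j m g B: a first row j + m, then the
   conjugate of B - 3 padded to j - 3 rows and raised by j + 1, then four
   rows j + 1, then the conjugate of g padded to m - 2 rows and raised by 2.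
   Conjugation preserves sizes, so the image is again a partition of n; its
   Durfee side is j + 1 and it lies in Pbar1 (qimage_Pbar1).  Padded
   conjugation is injective on bounded nonincreasing sequences (pconj_inj),
   so the image determines the shape and hence l (qimage_inj). *)

Lemma geq_trans : transitive geq.
Proof. exact: rev_trans leq_trans. Qed.

Lemma geq_anti : antisymmetric geq.
Proof. by move=> x y /andP [] /= Hyx Hxy; apply/eqP; rewrite eqn_leq Hxy. Qed.

Lemma part_mono l i i' : sorted geq l -> i <= i' -> part l i' <= part l i.
Proof.
move=> Hs Hii'; rewrite /part.
have [Hi'|Hi'] := ltnP i'.-1 (size l); last by rewrite nth_default.
have Hi : i.-1 < size l by apply: leq_ltn_trans Hi'; lia.
by have := @sorted_leq_nth _ geq geq_trans leqnn 0 l Hs i.-1 i'.-1 Hi Hi'; apply; lia.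
Qed.

Lemma sorted_le_head l x : sorted geq l -> x \in l -> x <= part l 1.
Proof.
case: l => // y l; rewrite /= path_sortedE; last exact: geq_trans.
by rewrite in_cons => /andP [/allP Hy _] /predU1P [->|/Hy].
Qed.

Lemma sorted_take_ge l k x : sorted geq l -> x \in take k l -> part l k <= x.
Proof.
move=> Hs Hx; have Hi := Hx; rewrite -index_mem size_take_min in Hi.
rewrite -(nth_index 0 Hx) nth_take; last by move: Hi; rewrite leq_min => /andP [].
by rewrite -[nth _ _ _]/(part l (index x (take k l)).+1) part_mono //; lia.
Qed.

Lemma sorted_drop_le l k x : sorted geq l -> x \in drop k l -> x <= part l k.+1.
Proof.
move=> Hs /(sorted_le_head (drop_sorted k Hs)).
by rewrite /part /= nth_drop addn0.
Qed.

Lemma foldr_maxn_ge s x : x \in s -> x <= foldr maxn 0 s.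
Proof. by move=> Hx; rewrite foldrE (leq_bigmax_seq x). Qed.

Lemma foldr_maxn_le s k : (forall x, x \in s -> x <= k) -> foldr maxn 0 s <= k.
Proof. by move=> Hs; rewrite foldrE; apply/bigmax_leqP_seq => x Hx _; apply: Hs. Qed.

Lemma foldr_maxn_sorted s : sorted geq s -> foldr maxn 0 s = part s 1.
Proof.
move=> Hs; apply/eqP; rewrite eqn_leq; apply/andP; split.
  by apply: foldr_maxn_le => x; apply: sorted_le_head.
by case: s Hs => //= x s _; rewrite leq_maxl.
Qed.

Lemma durfee_eq l k : sorted geq l -> k <= part l k -> part l k.+1 <= k -> durfee l = k.
Proof.
move=> Hs Hk Hk1; apply/eqP; rewrite eqn_leq; apply/andP; split.
  apply: foldr_maxn_le => i; rewrite mem_filter => /andP [Hi _].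
  by case: (leqP i k) => // Hki; have := part_mono Hs Hki; lia.
apply: foldr_maxn_ge; rewrite mem_filter Hk mem_iota /=.
case: k Hk Hk1 => // k Hk _; rewrite /part /= in Hk.
by case: (ltnP k (size l)) => Hkl; [lia | rewrite nth_default in Hk].
Qed.

Lemma part_conj_part s k : part (conj_part s) k = count (fun x => k.-1 < x) s.
Proof.
rewrite /part /conj_part; have [Hk|Hk] := ltnP k.-1 (foldr maxn 0 s).
  by rewrite nth_mkseq.
rewrite nth_default ?size_mkseq //; apply/esym/eqP; rewrite eqn0Ngt -has_count.
by apply/hasPn => x /foldr_maxn_ge /= Hx; rewrite -leqNgt (leq_trans Hx).
Qed.

Lemma part_dalpha l k :
  part (dalpha l) k = count (fun i => durfee l + k.-1 < part l i) (iota 1 (durfee l)).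
Proof.
rewrite /dalpha part_conj_part count_map.
by apply: eq_count => i /=; rewrite ltn_subRL.
Qed.

Lemma size_dalpha l : sorted geq l -> 0 < durfee l -> size (dalpha l) = part l 1 - durfee l.
Proof.
move=> Hs Hj; rewrite /dalpha /conj_part size_mkseq foldr_maxn_sorted.
  by rewrite /part; case: (durfee l) Hj.
apply: (homo_sorted (e := leq)); last exact: iota_sorted.
by move=> i i' Hii' /=; rewrite leq_sub2r // part_mono.
Qed.

Lemma part_dbeta1 l : part (dbeta l) 1 = part l (durfee l).+1.
Proof. by rewrite /part /dbeta /= nth_drop addn0. Qed.

Lemma sorted_count_eq s1 s2 : sorted geq s1 -> sorted geq s2 -> size s1 = size s2 ->
  (forall t, count (fun x => t < x) s1 = count (fun x => t < x) s2) -> s1 = s2.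
Proof.
move=> Hs1 Hs2 Hsz Hc; apply: (sorted_eq geq_trans geq_anti) => //.
apply/allP => x _; apply/eqP.
have count_eq s :
    count (pred1 x) s = count (fun y => x <= y) s - count (fun y => x < y) s.
  elim: s => //= y s ->.
  have : count (fun y => x < y) s <= count (fun y => x <= y) s by apply: sub_count => z /ltnW.
  by case: (ltngtP x y) => [Hxy|Hxy|->]; rewrite ?eqxx ?(gtn_eqF Hxy) ?(ltn_eqF Hxy) /=; lia.
rewrite !count_eq {count_eq}; case: x => [|x]; last by rewrite !Hc.
by rewrite !(@eq_count _ (fun y => 0 <= y) predT) // !count_predT Hsz Hc.
Qed.

(* The conjugate of the partition obtained by lowering every entry of s by a,
   padded or truncated to exactly k rows. *)
Definition pconj (a k : nat) (s : seq nat) : seq nat :=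
  [seq count (fun x => t < x) s | t <- iota a k].

Lemma size_pconj a k s : size (pconj a k s) = k.
Proof. by rewrite size_map size_iota. Qed.

Lemma pconj_sorted a k s : sorted geq (pconj a k s).
Proof.
apply: (homo_sorted (e := leq)); last exact: iota_sorted.
by move=> t t' Htt' /=; apply: sub_count => x /=; apply: leq_ltn_trans.
Qed.

Lemma pconj_le_size a k s x : x \in pconj a k s -> x <= size s.
Proof. by case/mapP => t _ ->; apply: count_size. Qed.

Lemma sumn_addn c s : sumn [seq c + x | x <- s] = c * size s + sumn s.
Proof. by elim: s => [|x s IH] /=; [rewrite muln0 | rewrite IH mulnS; lia]. Qed.

Lemma sumn_pconj a k s : all (fun x => a <= x <= a + k) s ->
  sumn (pconj a k s) + a * size s = sumn s.
Proof.
have row_count x : sumn [seq nat_of_bool (t < x) | t <- iota a k] = minn (x - a) k.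
  elim: k a => [|k IH] a /=; first by rewrite minn0.
  by rewrite IH; case: (ltnP a x) => Hax; lia.
elim: s => [|x s IH] /=; first by rewrite muln0 addn0 /pconj; elim: (iota a k) => //= t r ->.
case/andP => Hx /IH <-.
have -> : sumn (pconj a k (x :: s))
         = sumn [seq nat_of_bool (t < x) | t <- iota a k] + sumn (pconj a k s).
  by rewrite /pconj; elim: (iota a k) => //= t r ->; lia.
by rewrite row_count; lia.
Qed.

Lemma pconj_inj a k s1 s2 : sorted geq s1 -> sorted geq s2 -> size s1 = size s2 ->
  all (fun x => a <= x <= a + k) s1 -> all (fun x => a <= x <= a + k) s2 ->
  pconj a k s1 = pconj a k s2 -> s1 = s2.
Proof.
move=> Hs1 Hs2 Hsz Hb1 Hb2 /eq_in_map Hc; apply: sorted_count_eq => // t.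
have [Hta|Hat] := ltnP t a.
  have count_all s : all (fun x => a <= x <= a + k) s -> count (fun x => t < x) s = size s.
    move=> Hb; rewrite -count_predT; apply: eq_in_count => x /(allP Hb) /=; lia.
  by rewrite !count_all.
have [Htk|Hkt] := ltnP t (a + k); first by apply: Hc; rewrite mem_iota; lia.
have count_none s : all (fun x => a <= x <= a + k) s -> count (fun x => t < x) s = 0.
  move=> Hb; rewrite -(count_pred0 s); apply: eq_in_count => x /(allP Hb) /=; lia.
by rewrite !count_none.
Qed.

Lemma sorted_cat_geq c s1 s2 : sorted geq s1 -> sorted geq s2 ->
  all (fun x => c <= x) s1 -> all (fun x => x <= c) s2 -> sorted geq (s1 ++ s2).
Proof.
move=> Hs1 Hs2 Hc1 Hc2; rewrite sorted_pairwise; last exact: geq_trans.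
rewrite pairwise_cat -!sorted_pairwise ?Hs1 ?Hs2 ?andbT; try exact: geq_trans.
apply/allrelP => x y Hx Hy /=.
by apply: (@leq_trans c); [exact: (allP Hc2) | exact: (allP Hc1)].
Qed.

Record qshape (j m : nat) (g B : seq nat) : Prop := QShape {
  qshape_j : 3 <= j;
  qshape_m : 3 <= m;
  qshape_size_g : size g = j.-1;
  qshape_sorted_g : sorted geq g;
  qshape_bound_g : all (fun x => x <= m - 3) g;
  qshape_size_B : size B = m.-1;
  qshape_sorted_B : sorted geq B;
  qshape_bound_B : all (fun x => 3 <= x <= j) B }.

Definition glue (j : nat) (g B : seq nat) : seq nat :=
  [seq j.+2 + x | x <- g] ++ j.+2 :: j :: B.

Lemma sumn_glue j g B : 0 < j -> size g = j.-1 ->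
  sumn (glue j g B) = j * j + 3 * j + sumn g + sumn B.
Proof.
move=> Hj Hg; rewrite sumn_cat sumn_addn Hg /=.
by case: j Hj Hg => // j _ _ /=; nia.
Qed.

Definition qimage (j m : nat) (g B : seq nat) : seq nat :=
  (j + m) :: [seq j.+1 + x | x <- pconj 3 (j - 3) B] ++ nseq 4 j.+1
          ++ [seq 2 + x | x <- pconj 0 (m - 2) g].

Section QImage.
Variables (j m : nat) (g B : seq nat).
Hypothesis shapeQ : qshape j m g B.

Let Hj := qshape_j shapeQ.
Let Hm := qshape_m shapeQ.

Lemma size_qimage : size (qimage j m g B) = j + m.
Proof. rewrite /= !size_cat /= !size_map ?size_iota; lia. Qed.

Lemma nth_qimage_square i : j - 2 <= i <= j + 1 -> nth 0 (qimage j m g B) i = j.+1.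
Proof.
case: i => [|i] Hi /=; first lia.
rewrite nth_cat size_map size_pconj ifF; last lia.
have : i - (j - 3) < 4 by lia.
by case: (i - (j - 3)) => [|[|[|[|k]]]].
Qed.

Lemma qimage_upper_bounds x : x \in [seq j.+1 + x | x <- pconj 3 (j - 3) B] -> j.+1 <= x <= j + m.
Proof.
case/mapP => y /pconj_le_size; rewrite (qshape_size_B shapeQ) => Hy ->; lia.
Qed.

Lemma qimage_lower_bounds x : x \in [seq 2 + x | x <- pconj 0 (m - 2) g] -> 2 <= x <= j.+1.
Proof.
case/mapP => y /pconj_le_size; rewrite (qshape_size_g shapeQ) => Hy ->; lia.
Qed.

Lemma qimage_ge2 : all (fun x => 2 <= x) (qimage j m g B).
Proof.
apply/andP; split; first lia.
by apply/allP => x; rewrite !mem_cat => /or3P [/qimage_upper_bounds|/nseqP [-> _]|/qimage_lower_bounds]; lia.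
Qed.

Lemma qimage_sorted : sorted geq (qimage j m g B).
Proof.
have raised_sorted c a k s : sorted geq [seq c + x | x <- pconj a k s].
  by apply: homo_sorted (pconj_sorted a k s) => x y /=; rewrite leq_add2l.
rewrite -[sorted geq _]/(path geq (j + m) _) path_sortedE; last exact: geq_trans.
apply/andP; split.
  by apply/allP => x; rewrite !mem_cat => /or3P [/qimage_upper_bounds|/nseqP [-> _]|/qimage_lower_bounds] /=; lia.
apply: (sorted_cat_geq (c := j.+1)) => //.
- apply: (sorted_cat_geq (c := j.+1)) => //; first by rewrite /= !leqnn.
  + by apply/allP => x /nseqP [-> _].
  + by apply/allP => x /qimage_lower_bounds /andP [].
- by apply/allP => x /qimage_upper_bounds /andP [].
- by apply/allP => x; rewrite mem_cat => /orP [/nseqP [-> _]|/qimage_lower_bounds /andP []].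
Qed.

Lemma sumn_qimage : sumn (qimage j m g B) = j * j + 3 * j + sumn g + sumn B.
Proof.
have HB : sumn (pconj 3 (j - 3) B) + 3 * size B = sumn B.
  by apply: sumn_pconj; apply/allP => x /(allP (qshape_bound_B shapeQ)) /=; lia.
have Hg : sumn (pconj 0 (m - 2) g) + 0 * size g = sumn g.
  by apply: sumn_pconj; apply/allP => x /(allP (qshape_bound_g shapeQ)) /=; lia.
rewrite -[sumn _]/(j + m + sumn _) !sumn_cat !sumn_addn sumn_nseq !size_pconj.
by rewrite -HB -Hg (qshape_size_B shapeQ); nia.
Qed.

Lemma durfee_qimage : durfee (qimage j m g B) = j.+1.
Proof. by apply: durfee_eq qimage_sorted _ _; rewrite /part nth_qimage_square //; lia. Qed.

(* The image lies in Pbar1: its Durfee side is j + 1, alpha has m - 1 parts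
   and at most j - 2 of the square's rows stick out. *)
Lemma qimage_Pbar1 : qimage j m g B \in Pbar1 (j * j + 3 * j + sumn g + sumn B).
Proof.
have Hpos : all (fun x => 0 < x) (qimage j m g B).
  by apply/allP => x /(allP qimage_ge2) /=; lia.
have Hrow1 : part (qimage j m g B) 1 = j + m by [].
have Hsquare i : j - 1 <= i <= j + 2 -> part (qimage j m g B) i = j.+1.
  by move=> Hi; rewrite /part nth_qimage_square //; lia.
rewrite unfold_in /Pbar1 /is_partition qimage_sorted sumn_qimage eqxx Hpos /rank_nonneg.
rewrite size_qimage Hrow1 leqnn durfee_qimage size_dalpha ?qimage_sorted ?durfee_qimage //.
rewrite /dbeta size_drop size_qimage Hrow1 -/(dbeta _) part_dbeta1 durfee_qimage Hsquare; last lia.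
rewrite part_dalpha durfee_qimage /smallest_ge.
have -> : iota 1 j.+1 = iota 1 (j - 2) ++ iota (1 + (j - 2)) 3 by rewrite -iotaD; congr iota; lia.
rewrite count_cat /= !Hsquare; try lia.
have := count_size (fun i => j.+1 + 0 < part (qimage j m g B) i) (iota 1 (j - 2)).
rewrite size_iota addn0 ltnn !eqxx /= => Hcount.
apply/andP; split; first lia.
by apply/allP => x /mem_drop /(allP qimage_ge2).
Qed.

End QImage.

Lemma qimage_inj j1 m1 g1 B1 j2 m2 g2 B2 :
  qshape j1 m1 g1 B1 -> qshape j2 m2 g2 B2 -> qimage j1 m1 g1 B1 = qimage j2 m2 g2 B2 ->
  [/\ j1 = j2, g1 = g2 & B1 = B2].
Proof.
move=> Q1 Q2 E.
have Ej : j1 = j2 by move: (congr1 durfee E); rewrite (durfee_qimage Q1) (durfee_qimage Q2) => -[].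
subst j2; case: E => /eqP; rewrite eqn_add2l => /eqP Em; subst m2.
move=> /eqP; rewrite eqseq_cat ?size_map ?size_pconj // => /andP [/eqP ES /eqP [ED]].
have [Hj _ Hsg1 Hsortg1 Hbg1 HsB1 HsortB1 HbB1] := Q1.
have [_ _ Hsg2 Hsortg2 Hbg2 HsB2 HsortB2 HbB2] := Q2.
split => //.
- apply: (pconj_inj (a := 0) (k := m1 - 2)) => //; last exact: (inj_map (f := addn 2) (@addnI 2) ED).
  + by rewrite Hsg1 Hsg2.
  + by apply/allP => x /(allP Hbg1) /=; lia.
  + by apply/allP => x /(allP Hbg2) /=; lia.
- apply: (pconj_inj (a := 3) (k := j1 - 3)) => //; last exact: (inj_map (f := addn j1.+1) (@addnI j1.+1) ES).
  + by rewrite HsB1 HsB2.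
  + by apply/allP => x /(allP HbB1) /=; lia.
  + by apply/allP => x /(allP HbB2) /=; lia.
Qed.

Lemma Qbar1_partition n l : l \in Qbar1 n -> sorted geq l /\ sumn l = n.
Proof. by rewrite unfold_in => /and3P [/and3P [Hs _ /eqP Hsum] _ _]. Qed.

Lemma Qbar1_rows n l : l \in Qbar1 n ->
  [/\ part l (durfee l) = (durfee l).+2, part l (durfee l).+1 = durfee l,
      3 <= durfee l, part l 1 < size l & smallest_ge (dbeta l) 3].
Proof.
move=> Ql; have [Hs _] := Qbar1_partition Ql; move: Ql.
rewrite unfold_in /Qbar1; set j := durfee l.
case/and5P => _ Hj /eqP Hb1 Hsz /and4P [_ Ha2 Ha3 Hsm].
rewrite part_dbeta1 -/j in Hb1.
rewrite part_dalpha -/j /= in Ha2; rewrite part_dalpha -/j /= in Ha3.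
have Hlj : part l j = j.+2.
  apply/eqP; rewrite eqn_leq; apply/andP; split.
    have : ~~ all (fun i => j + 2 < part l i) (iota 1 j).
      by rewrite all_count size_iota ltn_eqF.
    case/allPn => i; rewrite mem_iota -leqNgt => Hi Hli.
    by have := part_mono Hs (_ : i <= j); lia.
  have : all (fun i => j + 1 < part l i) (iota 1 j) by rewrite all_count size_iota Ha2.
  by move/allP/(_ j); rewrite mem_iota addn1; apply; lia.
have Hl1 : part l 1 < size l.
  move: Hsz; rewrite size_dalpha // /dbeta size_drop.
  by have := part_mono Hs (_ : 1 <= j); lia.
split => //; have Hjl : j < size l by have := part_mono Hs (_ : 1 <= j); lia.
have : j \in dbeta l by rewrite /dbeta (drop_nth 0 Hjl) -[nth _ _ _]/(part l j.+1) Hb1 mem_head.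
by move/(allP Hsm).
Qed.

Definition qhead (l : seq nat) : seq nat :=
  [seq x - (durfee l).+2 | x <- take (durfee l).-1 l].
Definition qtail (l : seq nat) : seq nat := drop (durfee l).+1 l.

Lemma Qbar1_shape n l : l \in Qbar1 n ->
  qshape (durfee l) (size l - durfee l) (qhead l) (qtail l) /\
  l = glue (durfee l) (qhead l) (qtail l).
Proof.
move=> Ql; have [Hs _] := Qbar1_partition Ql.
have [Hlj Hlj1 Hj Hl1 Hsm] := Qbar1_rows Ql.
rewrite /qhead /qtail; set j := durfee l in Hlj Hlj1 Hj Hl1 *.
have Hl1j : j.+2 <= part l 1 by rewrite -Hlj part_mono //; lia.
have Htake x : x \in take j.-1 l -> j.+2 <= x <= part l 1.
  move=> Hx; rewrite sorted_le_head ?(mem_take Hx) // andbT -Hlj.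
  by apply: leq_trans (sorted_take_ge Hs Hx); apply: part_mono; lia.
have Hdrop x : x \in drop j.+1 l -> 3 <= x <= j.
  move=> Hx; have {}Hx : x \in dbeta l.
    by apply: (mem_drop (n0 := 1)); rewrite /dbeta drop_drop add1n.
  by rewrite (allP Hsm) //= -Hlj1 sorted_drop_le.
split.
  constructor => //; try lia.
  - by rewrite size_map size_takel //; lia.
  - by apply: homo_sorted (take_sorted _ Hs) => x y /= /leq_sub2r.
  - by apply/allP => _ /mapP [x /Htake Hx ->]; lia.
  - by rewrite size_drop; lia.
  - exact: drop_sorted.
  - by apply/allP => x /Hdrop.
rewrite /glue -map_comp map_id_in; last by move=> x /Htake /andP [Hx _] /=; rewrite subnKC.
have Hjl : j < size l by lia.
rewrite -{1}(cat_take_drop j.-1 l) (drop_nth 0) ?prednK ?(drop_nth 0 Hjl); try lia.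
by move: Hlj Hlj1; rewrite /part /= => -> ->.
Qed.

Definition phi (l : seq nat) : seq nat :=
  qimage (durfee l) (size l - durfee l) (qhead l) (qtail l).

Theorem lemma5p1 (n : nat) (hn : 1 <= n) :
  exists f : seq nat -> seq nat,
    {in Qbar1 n, forall l, f l \in Pbar1 n} /\ {in Qbar1 n &, injective f}.
Proof.
exists phi; split.
  move=> l Ql; have [Qs Hl] := Qbar1_shape Ql; have [_ Hsum] := Qbar1_partition Ql.
  suff -> : n = durfee l * durfee l + 3 * durfee l + sumn (qhead l) + sumn (qtail l).
    exact: qimage_Pbar1.
  rewrite -Hsum {1}Hl sumn_glue //; first by have := qshape_j Qs; lia.
  exact: qshape_size_g Qs.
move=> l1 l2 Q1 Q2 E.
have [Qs1 Hl1] := Qbar1_shape Q1; have [Qs2 Hl2] := Qbar1_shape Q2.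
have [Ej Eg EB] := qimage_inj Qs1 Qs2 E.
by rewrite Hl1 Hl2 Ej Eg EB.
Qed.
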